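(* Let $m,n$ be positive integers. (i) For every $A\in[0,1)^{m\times n}$, $\Lambda_A(m,n)=[0,1)^m\setminus\mathbf{Bad}_A(m,n)$. (ii) For every $\boldsymbol{\gamma}\in[0,1)^m$, $\Lambda^{\boldsymbol{\gamma}}(m,n)=[0,1)^{m\times n}\setminus\mathbf{Bad}^{\boldsymbol{\gamma}}(m,n)$.
   Context: $[0,1)^{m\times n}$ is the set of real $m\times n$ matrices with entries in $[0,1)$. For $\boldsymbol{x}\in\mathbb{R}^n$, $\|\boldsymbol{x}\|=\max_i|x_i|$; for $\boldsymbol{y}\in\mathbb{R}^m$, $\langle\boldsymbol{y}\rangle=\min_{\boldsymbol{p}\in\mathbb{Z}^m}\|\boldsymbol{y}-\boldsymbol{p}\|$. For $\psi:\mathbb{N}\to[0,\infty)$, $W_{m,n}(\psi)$ is the set of pairs $(A,\boldsymbol{\gamma})\in[0,1)^{m\times n}\times[0,1)^m$ such that $\langle A\boldsymbol{q}-\boldsymbol{\gamma}\rangle<\psi(\|\boldsymbol{q}\|)$ for infinitely many $\boldsymbol{q}\in\mathbb{Z}^n$. ''Decreasing'' means non-increasing. $\mathcal{C}$ is the set of decreasing $\psi:\mathbb{N}\to[0,\infty)$ with $\sum_{q\ge1}q^{n-1}\psi(q)^m<\infty$. $\Lambda(m,n)=\bigcup_{\psi\in\mathcal{C}}W_{m,n}(\psi)$, $\Lambda_A(m,n)=\{\boldsymbol{\gamma}:(A,\boldsymbol{\gamma})\in\Lambda(m,n)\}$, $\Lambda^{\boldsymbol{\gamma}}(m,n)=\{A:(A,\boldsymbol{\gamma})\in\Lambda(m,n)\}$.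 $\mathbf{Bad}(m,n)=\{(A,\boldsymbol{\gamma}):\liminf_{\boldsymbol{q}\in\mathbb{Z}^n,\|\boldsymbol{q}\|\to\infty}\|\boldsymbol{q}\|^n\langle A\boldsymbol{q}-\boldsymbol{\gamma}\rangle^m>0\}$, $\mathbf{Bad}_A(m,n)=\{\boldsymbol{\gamma}\in[0,1)^m:(A,\boldsymbol{\gamma})\in\mathbf{Bad}(m,n)\}$, $\mathbf{Bad}^{\boldsymbol{\gamma}}(m,n)=\{A\in[0,1)^{m\times n}:(A,\boldsymbol{\gamma})\in\mathbf{Bad}(m,n)\}$. *)

From HB Require Import structures.
From mathcomp Require Import all_boot all_order all_algebra.
From mathcomp Require Import all_classical all_reals all_analysis.
Set Implicit Arguments. Unset Strict Implicit. Unset Printing Implicit Defensive.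
Import Order.TTheory GRing.Theory Num.Theory numFieldNormedType.Exports.
Local Open Scope classical_set_scope.
Local Open Scope ring_scope.

Section Defs.
Variable R : realType.

Definition supnorm {m : nat} (y : 'cV[R]_m) : R := \big[Num.max/0]_(i < m) `|y i ord0|.

Definition isupnorm {n : nat} (q : 'cV[int]_n) : nat := \max_(i < n) absz (q i ord0).

(* <y> = min over p in Z^m of ||y - p||  (taken as an infimum; it is attained) *)
Definition distZ {m : nat} (y : 'cV[R]_m) : R :=
  inf [set supnorm (y - map_mx (fun z : int => z%:~R) p) | p in [set: 'cV[int]_m]].

Definition Aq {m n : nat} (A : 'M[R]_(m, n)) (q : 'cV[int]_n) : 'cV[R]_m :=
  A *m map_mx (fun z : int => z%:~R) q.

Definition in_unit_mx {m n : nat} (A : 'M[R]_(m, n)) : Prop :=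
  forall i j, 0 <= A i j < 1.

Definition W (m n : nat) (psi : nat -> R) (A : 'M[R]_(m, n)) (g : 'cV[R]_m) : Prop :=
  in_unit_mx A /\ in_unit_mx g /\
  infinite_set [set q : 'cV[int]_n | distZ (Aq A q - g) < psi (isupnorm q)].

(* the class C: psi : N -> [0,oo) decreasing, sum_{q>=1} q^(n-1) psi(q)^m < oo.
   N = {1,2,...}: the value psi 0 is irrelevant and left unconstrained. *)
Definition classC (m n : nat) (psi : nat -> R) : Prop :=
  (forall k, (1 <= k)%N -> 0 <= psi k) /\
  (forall a b, (1 <= a <= b)%N -> psi b <= psi a) /\
  cvgn (series (fun k : nat => (k.+1)%:R ^+ (n.-1) * psi k.+1 ^+ m)).

Definition Lambda (m n : nat) (A : 'M[R]_(m, n)) (g : 'cV[R]_m) : Prop :=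
  exists psi, classC m n psi /\ W psi A g.

(* Bad(m,n): liminf_{||q|| -> oo} ||q||^n <Aq - g>^m > 0, i.e. there are c > 0
   and N such that ||q||^n <Aq-g>^m >= c whenever ||q|| >= N. *)
Definition Bad (m n : nat) (A : 'M[R]_(m, n)) (g : 'cV[R]_m) : Prop :=
  in_unit_mx A /\ in_unit_mx g /\
  exists c : R, 0 < c /\ exists N : nat, forall q : 'cV[int]_n,
    (N <= isupnorm q)%N -> c <= (isupnorm q)%:R ^+ n * distZ (Aq A q - g) ^+ m.

End Defs.

(* If psi is decreasing and sum_k k^(n-1) psi(k)^m converges, the block sums of
   this series over [k/2, k) tend to 0 and dominate 2^-n k^n psi(k)^m, so
   k^n psi(k)^m -> 0.  At the infinitely many q with <Aq - g> < psi(|q|) this makes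
   |q|^n <Aq - g>^m arbitrarily small, so (A, g) is not badly approximable.
   Conversely, if (A, g) is not badly approximable, choose q_j with strictly
   increasing norms K_j and K_j^n <A q_j - g>^m < 2^-j, put
   d_j = (2^-j / K_j^n)^(1/m) > <A q_j - g>, and let psi be the decreasing step
   function equal to d_j on (K_(j-1), K_j].  Comparing block by block,
   sum_k k^(n-1) psi(k)^m <= sum_j K_j^n d_j^m = sum_j 2^-j. *)

From HB Require Import structures.
From mathcomp Require Import all_boot all_order all_algebra.
From mathcomp Require Import all_classical all_reals all_analysis.
From mathcomp Require Import zify ring.
Set Implicit Arguments. Unset Strict Implicit. Unset Printing Implicit Defensive.
Import Order.TTheory GRing.Theory Num.Theory numFieldNormedType.Exports.
Local Open Scope classical_set_scope.
Local Open Scope ring_scope.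

Lemma supnorm_ge0 (R : realType) (m : nat) (y : 'cV[R]_m) : 0 <= supnorm y.
Proof. by rewrite /supnorm; elim/big_ind: _ => // x z; rewrite le_max => ->. Qed.

Lemma distZ_ge0 (R : realType) (m : nat) (y : 'cV[R]_m) : 0 <= distZ y.
Proof.
apply: lb_le_inf; first by exists (supnorm (y - map_mx intr 0)), 0.
by move=> _ [p _ <-]; apply: supnorm_ge0.
Qed.

Lemma leq_isupnorm (n : nat) (q : 'cV[int]_n) i : (absz (q i ord0) <= isupnorm q)%N.
Proof. by rewrite /isupnorm (bigD1 i) //= leq_maxl. Qed.

Lemma finite_isupnorm_le (n M : nat) :
  finite_set [set q : 'cV[int]_n | (isupnorm q <= M)%N].
Proof.
pose shift (x : 'cV['I_(2 * M).+1]_n) := map_mx (fun i : 'I__ => (i : nat)%:Z - M%:Z) x.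
apply: (sub_finite_set _ (finite_image shift (@finite_finset _ setT))) => q /= qM.
exists (\matrix_(i, j) inord (absz (q i j + M%:Z)%R)) => //.
apply/matrixP => i j; rewrite !mxE (ord1 j).
have := leq_isupnorm q i; move: (q i ord0) => z zM.
rewrite inordK; lia.
Qed.

Lemma infinite_isupnorm_unbounded (n : nat) (S : set 'cV[int]_n) :
  infinite_set S -> forall M, exists2 q, S q & (M < isupnorm q)%N.
Proof.
move=> Sinf M; apply: contrapT => noq; apply: Sinf.
apply: sub_finite_set (finite_isupnorm_le n M) => q Sq /=.
by rewrite leqNgt; apply/negP => Mq; apply: noq; exists q.
Qed.

Lemma cvgn_series_cauchy (R : realType) (u : nat -> R) : cvgn (series u) ->
  forall e, 0 < e -> exists N, forall a b, (N <= a)%N -> (N <= b)%N ->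
    `|\sum_(a <= k < b) u k| < e.
Proof.
move=> /cvg_cauchy/cauchy_seriesP cu e /cu [[A B] /= [[NA _ NAA] [NB _ NBB]] AB].
exists (maxn NA NB) => a b Na Nb; apply: (AB (a, b)).
by split; [apply: NAA | apply: NBB] => /=; lia.
Qed.

Section WeightedSummable.
Variables (R : realType) (n : nat) (a : nat -> R).
Hypotheses (n_gt0 : (0 < n)%N)
  (a_ge0 : forall k, (1 <= k)%N -> 0 <= a k)
  (a_noninc : forall i k, (1 <= i <= k)%N -> a k <= a i).

Lemma block_sum_ge k : (1 <= k)%N ->
  k%:R ^+ n * a k / 2 ^+ n <= \sum_(k./2 <= i < k) (i.+1)%:R ^+ n.-1 * a i.+1.
Proof.
move=> k_ge1; have ak_ge0 := a_ge0 k_ge1.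
have half_ge0 : 0 <= k%:R / 2 :> R by rewrite divr_ge0.
have term_ge i : (k./2 <= i < k)%N -> (k%:R / 2) ^+ n.-1 * a k <= (i.+1)%:R ^+ n.-1 * a i.+1.
  move=> /andP[ki ik]; apply: ler_pM; rewrite ?exprn_ge0 //.
    by apply: lerXn2r; rewrite ?nnegrE // ler_pdivrMr // -natrM ler_nat; lia.
  by apply: a_noninc; lia.
apply: le_trans (ler_sum_nat term_ge); rewrite sumr_const_nat -[_ *+ (k - _)]mulr_natr.
have -> : k%:R ^+ n * a k / 2 ^+ n = (k%:R / 2) ^+ n.-1 * a k * (k%:R / 2).
  by rewrite -[in LHS](prednK n_gt0) !exprS expr_div_n; field; rewrite expf_neq0.
apply: ler_wpM2l; first by rewrite mulr_ge0 ?exprn_ge0.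
by rewrite ler_pdivrMr // -natrM ler_nat; lia.
Qed.

Lemma weighted_summable_cvg0 :
  cvgn (series (fun k => (k.+1)%:R ^+ n.-1 * a k.+1)) ->
  (fun k => k%:R ^+ n * a k) @ \oo --> 0.
Proof.
move=> /cvgn_series_cauchy cu; apply/cvgr0Pnorm_lt => e e_gt0.
have two_n_gt0 : 0 < 2 ^+ n :> R by rewrite exprn_gt0.
have [N blockN] := cu _ (divr_gt0 e_gt0 two_n_gt0).
near=> k; have Nk : (2 * N < k)%N by near: k; apply: nbhs_infty_gt.
have k_ge1 : (1 <= k)%N by lia.
rewrite ger0_norm ?mulr_ge0 ?exprn_ge0 ?a_ge0 //.
rewrite -(@ltr_pM2r _ (2 ^+ n)^-1) ?invr_gt0 //.
apply: le_lt_trans (block_sum_ge k_ge1) (le_lt_trans (ler_norm _) (blockN _ _ _ _)); lia.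
Unshelve. all: by end_near. Qed.

End WeightedSummable.

Lemma classC_W_not_Bad (R : realType) (m n : nat) (psi : nat -> R)
    (A : 'M[R]_(m, n)) (g : 'cV[R]_m) :
  (0 < n)%N -> classC m n psi -> W psi A g -> ~ Bad A g.
Proof.
move=> n_gt0 [psi_ge0 [psi_noninc psi_sum]] [_ [_ Winf]].
move=> [_ [_ [c [c_gt0 [N Bad_N]]]]].
have psi_m_ge0 k : (1 <= k)%N -> 0 <= psi k ^+ m by move/psi_ge0/exprn_ge0.
have psi_m_noninc i k : (1 <= i <= k)%N -> psi k ^+ m <= psi i ^+ m.
  by move=> ik; rewrite lerXn2r ?nnegrE ?psi_noninc ?psi_ge0 //; lia.
have /cvgr0Pnorm_lt/(_ c c_gt0) [N' _ smallN'] :=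
  weighted_summable_cvg0 n_gt0 psi_m_ge0 psi_m_noninc psi_sum.
have [q /= Wq Nq] := infinite_isupnorm_unbounded Winf (maxn N N').
have /Bad_N : (N <= isupnorm q)%N by lia.
have /smallN' : (N' <= isupnorm q)%N by lia.
have /psi_ge0 : (1 <= isupnorm q)%N by lia.
move: Wq; set k := isupnorm q => Wq psi_k_ge0 small_k; apply/negP; rewrite -ltNge.
apply: le_lt_trans (le_trans _ (ler_norm _)) small_k.
by rewrite ler_wpM2l ?exprn_ge0 // lerXn2r ?nnegrE ?distZ_ge0 ?(ltW Wq).
Qed.

Lemma sum_weights_le (R : realType) (n a b : nat) : (0 < n)%N -> (a <= b)%N ->
  \sum_(a <= k < b) (k.+1)%:R ^+ n.-1 <= b%:R ^+ n :> R.
Proof.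
move=> n_gt0 ab; apply: (@le_trans _ _ (\sum_(a <= k < b) b%:R ^+ n.-1)).
  apply: ler_sum_nat => k /andP[_ kb].
  by rewrite lerXn2r ?nnegrE ?ler_nat.
rewrite sumr_const_nat -[in leRHS](prednK n_gt0) exprS -[_ *+ (b - a)]mulr_natl.
by rewrite ler_wpM2r ?exprn_ge0 // ler_nat leq_subr.
Qed.

Section StepFunction.
Variables (R : realType) (K : nat -> nat).
Hypothesis K_incr : {homo K : i j / (i < j)%N}.
Variable d : nat -> R.
Hypotheses (d_ge0 : forall j, 0 <= d j) (d_noninc : nonincreasing_seq d).

Lemma leq_K j : (j <= K j)%N.
Proof. by elim: j => // j IHj; apply: leq_ltn_trans IHj (K_incr (ltnSn j)). Qed.

Definition block_index k := ex_minn (ex_intro (fun j => (k <= K j)%N) k (leq_K k)).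

Lemma block_index_eq j k : (k <= K j)%N -> (forall i, (i < j)%N -> (K i < k)%N) ->
  block_index k = j.
Proof.
rewrite /block_index; case: ex_minnP => i k_le_Ki i_min k_le_Kj below_j.
apply/eqP; rewrite eqn_leq i_min //= leqNgt; apply/negP => /below_j.
by rewrite ltnNge k_le_Ki.
Qed.

Lemma block_index_mono : {homo block_index : k l / (k <= l)%N}.
Proof.
move=> k l kl; rewrite /block_index; case: ex_minnP => i _ i_min.
by case: ex_minnP => j l_le_Kj _; apply: i_min (leq_trans kl l_le_Kj).
Qed.

Definition step_fun k := d (block_index k).

Lemma step_fun_K j : step_fun (K j) = d j.
Proof. by rewrite /step_fun (@block_index_eq j) // => i; apply: K_incr. Qed.

Lemma step_fun_noninc : nonincreasing_seq step_fun.
Proof. by move=> k l /block_index_mono; apply: d_noninc. Qed.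

Lemma step_fun_ge0 k : 0 <= step_fun k.
Proof. exact: d_ge0. Qed.

Variables (m n : nat).
Hypothesis n_gt0 : (0 < n)%N.

Lemma series_step_fun_le j :
  series (fun k => (k.+1)%:R ^+ n.-1 * step_fun k.+1 ^+ m) (K j) <=
  series (fun i => (K i)%:R ^+ n * d i ^+ m) j.+1.
Proof.
have block a b i : (a <= b)%N -> (forall k, (a <= k < b)%N -> block_index k.+1 = i) ->
    \sum_(a <= k < b) (k.+1)%:R ^+ n.-1 * step_fun k.+1 ^+ m <= b%:R ^+ n * d i ^+ m.
  move=> ab blk; rewrite (eq_big_nat _ _ (F2 := fun k => (k.+1)%:R ^+ n.-1 * d i ^+ m)).
    by rewrite -mulr_suml ler_wpM2r ?exprn_ge0 ?sum_weights_le.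
  by move=> k /blk; rewrite /step_fun => ->.
elim: j => [|j IHj].
  rewrite /series /= big_nat1; apply: block => // k /andP[_ kK].
  by apply: block_index_eq.
rewrite /series /= big_nat_recr //= -/(series _ (K j)).
rewrite (big_cat_nat (leq0n (K j))) ?(ltnW (K_incr (ltnSn j))) //=.
apply: lerD IHj _; apply: block => // [|k /andP[Kk kK]]; first exact/ltnW/K_incr.
apply: block_index_eq => // i; rewrite ltnS leq_eqVlt => /predU1P[-> //|ij].
by apply: ltn_trans (K_incr ij) _.
Qed.

Lemma step_fun_summable :
  cvgn (series (fun i => (K i)%:R ^+ n * d i ^+ m)) ->
  cvgn (series (fun k => (k.+1)%:R ^+ n.-1 * step_fun k.+1 ^+ m)).
Proof.
set w := fun i => _; set u := fun k => _ => w_cvg.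
have w_incr : nondecreasing_seq (series w).
  by apply: nondecreasing_series => i _ _; rewrite /w mulr_ge0 ?exprn_ge0.
have u_incr : nondecreasing_seq (series u).
  by apply: nondecreasing_series => k _ _; rewrite /u mulr_ge0 ?exprn_ge0 ?step_fun_ge0.
apply: nondecreasing_is_cvgn => //; exists (limn (series w)) => _ [N _ <-].
apply: le_trans (u_incr _ _ (leq_K N)) _.
exact: le_trans (series_step_fun_le N) (nondecreasing_cvgn_le w_incr w_cvg _).
Qed.

End StepFunction.

Lemma exprn_powRV (R : realType) (m : nat) (x : R) : (0 < m)%N -> 0 <= x ->
  (x `^ m%:R^-1) ^+ m = x.
Proof.
move=> m_gt0 x_ge0; rewrite -powR_mulrn ?powR_ge0 // -powRrM mulVf ?powRr1 //.
by rewrite pnatr_eq0 -lt0n.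
Qed.

Lemma increasing_witnesses (T : Type) (sz : T -> nat) (P : nat -> T -> Prop) :
  (forall j N, exists2 x, (N <= sz x)%N & P j x) ->
  exists x : nat -> T,
    [/\ (0 < sz (x 0%N))%N, {homo sz \o x : i j / (i < j)%N} & forall j, P j (x j)].
Proof.
move=> exP.
have /choice [f fP] : forall jN : nat * nat, exists x, (jN.2 <= sz x)%N /\ P jN.1 x.
  by move=> [j N]; have [x] := exP j N; exists x.
pose fix x j := if j is j'.+1 then f (j, (sz (x j')).+1) else f (0%N, 1%N).
exists x; split.
- exact: (fP (0%N, 1%N)).1.
- by apply: homo_ltn => [? ? ?|j]; [apply: ltn_trans|apply: (fP (_, _)).1].
- by case=> [|j]; apply: (fP (_, _)).2.
Qed.

Lemma not_Bad_approx (R : realType) (m n : nat) (A : 'M[R]_(m, n)) (g : 'cV[R]_m) :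
  in_unit_mx A -> in_unit_mx g -> ~ Bad A g ->
  forall c, 0 < c -> forall N, exists2 q : 'cV[int]_n,
    (N <= isupnorm q)%N & (isupnorm q)%:R ^+ n * distZ (Aq A q - g) ^+ m < c.
Proof.
move=> A_unit g_unit not_Bad c c_gt0 N; apply: contrapT => no_q; apply: not_Bad.
do 2!split => //; exists c; split => //; exists N => q Nq.
by rewrite leNgt; apply/negP => small_q; apply: no_q; exists q.
Qed.

Lemma Lambda_of_witnesses (R : realType) (m n : nat) (A : 'M[R]_(m, n)) (g : 'cV[R]_m)
    (q : nat -> 'cV[int]_n) (d : nat -> R) :
  (0 < n)%N -> in_unit_mx A -> in_unit_mx g ->
  {homo isupnorm \o q : i j / (i < j)%N} ->
  (forall j, 0 <= d j) -> nonincreasing_seq d ->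
  (forall j, distZ (Aq A (q j) - g) < d j) ->
  cvgn (series (fun j => (isupnorm (q j))%:R ^+ n * d j ^+ m)) ->
  Lambda A g.
Proof.
move=> n_gt0 A_unit g_unit K_incr d_ge0 d_noninc q_approx w_cvg.
exists (step_fun K_incr d); split; first split.
- by move=> k _; apply: step_fun_ge0.
- by split=> [a b /andP[_ ab]|]; [apply: step_fun_noninc | apply: step_fun_summable].
do 2!split => //; move=> S_fin; apply: infinite_nat.
have -> : [set: nat] = q @^-1` [set q | distZ (Aq A q - g) < step_fun K_incr d (isupnorm q)].
  by apply/seteqP; split => // j _ /=; rewrite step_fun_K; apply: q_approx.
apply: finite_preimage S_fin => i j _ _ qij.
by apply: (incn_inj (leq_mono K_incr)); rewrite /= qij.
Qed.

Lemma not_Bad_Lambda (R : realType) (m n : nat) (A : 'M[R]_(m, n)) (g : 'cV[R]_m) :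
  (0 < m)%N -> (0 < n)%N -> in_unit_mx A -> in_unit_mx g -> ~ Bad A g -> Lambda A g.
Proof.
move=> m_gt0 n_gt0 A_unit g_unit not_Bad.
pose e := geometric 1 (2^-1 : R).
have e_gt0 j : 0 < e j by rewrite /e /geometric /= mul1r exprn_gt0.
have [q [q0_gt0 K_incr q_small]] := increasing_witnesses (sz := isupnorm)
  (P := fun j q => (isupnorm q)%:R ^+ n * distZ (Aq A q - g) ^+ m < e j)
  (fun j => not_Bad_approx A_unit g_unit not_Bad (e_gt0 j)).
set K := fun j => (isupnorm (q j))%:R : R.
have K_gt0 j : 0 < K j.
  by rewrite ltr0n (leq_trans q0_gt0) //; apply: (leq_mono K_incr).
have ratio_ge0 j : 0 <= e j / K j ^+ n by rewrite divr_ge0 ?exprn_ge0 ?ltW.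
pose d j := (e j / K j ^+ n) `^ m%:R^-1.
have d_m j : d j ^+ m = e j / K j ^+ n by rewrite exprn_powRV.
apply: (Lambda_of_witnesses (d := d) n_gt0 A_unit g_unit K_incr).
- by move=> j; apply: powR_ge0.
- apply/nonincreasing_seqP => j; apply: ge0_ler_powR; rewrite ?invr_ge0 ?nnegrE //.
  apply: ler_pM; rewrite ?invr_ge0 ?exprn_ge0 ?(ltW (e_gt0 _)) //.
    by rewrite /e /geometric /= !mul1r exprS ger_pMl ?exprn_gt0 // invf_le1 // ler1n.
  rewrite lef_pV2 ?posrE ?exprn_gt0 // lerXn2r ?nnegrE ?(ltW (K_gt0 _)) //.
  by rewrite /K ler_nat; apply/ltnW/K_incr.
- move=> j; rewrite -(ltr_pXn2r m_gt0) ?nnegrE ?distZ_ge0 ?powR_ge0 // d_m.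
  by rewrite ltr_pdivlMr ?exprn_gt0 // mulrC; apply: q_small.
- have -> : (fun j => K j ^+ n * d j ^+ m) = e.
    by apply/funext => j; rewrite d_m mulrC divfK // expf_neq0 // gt_eqF.
  by apply: is_cvg_geometric_series; rewrite gtr0_norm ?invf_lt1 ?ltr1n.
Qed.

Lemma LambdaE (R : realType) (m n : nat) (A : 'M[R]_(m, n)) (g : 'cV[R]_m) :
  (0 < m)%N -> (0 < n)%N ->
  Lambda A g <-> [/\ in_unit_mx A, in_unit_mx g & ~ Bad A g].
Proof.
move=> m_gt0 n_gt0; split=> [[psi [psiC psiW]]|[]]; last exact: not_Bad_Lambda.
have [A_unit [g_unit _]] := psiW.
by split=> //; apply: classC_W_not_Bad n_gt0 psiC psiW.
Qed.

Theorem corollary1p2 (R : realType) (m n : nat) (hm : (0 < m)%N) (hn : (0 < n)%N) :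
  (forall A : 'M[R]_(m, n), in_unit_mx A ->
     forall g : 'cV[R]_m,
       Lambda A g <-> (in_unit_mx g /\ ~ Bad A g)) /\
  (forall g : 'cV[R]_m, in_unit_mx g ->
     forall A : 'M[R]_(m, n),
       Lambda A g <-> (in_unit_mx A /\ ~ Bad A g)).
Proof.
by split=> [A A_unit g|g g_unit A]; rewrite LambdaE //; split=> [[]|[]].
Qed.
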